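(* Let $m\ge 0$ be an integer, $K\ge 1$, $h>0$, $L=Kh$, and work on the periodic interval $\mathbb{T}_L=\mathbb{R}/L\mathbb{Z}$. Let $c>0$ and $\Delta t>0$, and let $S_{\pm}$ be the shift operators $S_{\pm}f(x)=f(x\pm c\Delta t/2)$. Let $\mathcal{I}$ (resp. $\mathcal{J}$) denote the Hermite interpolation operator of order $m$ on the primary grid (resp. dual grid) defined below. Suppose $p^h(\cdot,n\Delta t)\in\operatorname{Range}(\mathcal{I})$ and $v^h(\cdot,(n+\tfrac12)\Delta t)\in\operatorname{Range}(\mathcal{J})$ for all integers $n\ge 0$ (with also $v^h(\cdot,-\Delta t/2)\in\operatorname{Range}(\mathcal J)$ given), and that for all $n\ge0$, with $t=n\Delta t$, $$v^h(\cdot,t+\tfrac{\Delta t}{2})=v^h(\cdot,t-\tfrac{\Delta t}{2})+\mathcal{J}S_{+}p^h(\cdot,t)-\mathcal{J}S_{-}p^h(\cdot,t),$$ $$p^h(\cdot,t+\Delta t)=p^h(\cdot,t)+\mathcal{I}S_{+}v^h(\cdot,t+\tfrac{\Delta t}{2})-\mathcal{I}S_{-}v^h(\cdot,t+\tfrac{\Delta t}{2}).$$ Define $P^h_{\pm}(\cdot,t)=p^h(\cdot,t)\mp S_{\pm}v^h(\cdot,t-\tfrac{\Delta t}{2})$ and $V^h_{\pm}(\cdot,t+\tfrac{\Delta t}{2})=v^h(\cdot,t+\tfrac{\Delta t}{2})\mp S_{\pm}p^h(\cdot,t)$, and $$Q^h(t)=|P^h_+(\cdot,t)|_{m+1}^2+|P^h_-(\cdot,t)|_{m+1}^2,\qquad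 R^h(t+\tfrac{\Delta t}{2})=|V^h_+(\cdot,t+\tfrac{\Delta t}{2})|_{m+1}^2+|V^h_-(\cdot,t+\tfrac{\Delta t}{2})|_{m+1}^2.$$ Then for every integer $n\ge 0$, $Q^h((n+1)\Delta t)=R^h((n+\tfrac12)\Delta t)=Q^h(n\Delta t)$; in particular $Q^h(n\Delta t)=R^h((n+\tfrac12)\Delta t)=Q^h(0)$ for all $n$.
   Context: Primary grid: nodes $x_j=jh$, $j=0,\dots,K-1$ (mod $L$); dual grid: nodes $x_{j+1/2}=(j+\tfrac12)h$. For a smooth $L$-periodic function $f$, the Hermite interpolant of order $m$ on the primary grid, $\mathcal{I}f$, is the unique $L$-periodic function which on each cell $[x_j,x_{j+1}]$ is a polynomial of degree at most $2m+1$ and whose value and first $m$ derivatives agree with those of $f$ at both endpoints of the cell; $\mathcal{J}$ is defined identically with the dual-grid nodes as cell endpoints. Both are linear projections, and their ranges consist of $C^m$ periodic piecewise polynomials. The seminorm is $|f|_{m+1}^2=\int_{\mathbb{T}_L}|\partial_x^{m+1}f|^2\,dx$ with associated semi-inner product $\langle f,g\rangle_{m+1}=\int_{\mathbb{T}_L}\partial_x^{m+1}f\,\partial_x^{m+1}g\,dx$. It is a known fact (Goodrich et al.) that each of $\mathcal{I},\mathcal{J}$ satisfies the orthogonality property $\langle \mathcal{I}f,\,g-\mathcal{I}g\rangle_{m+1}=0$ for all smooth (or range-of-interpolation) periodic $f,g$. The displayed update is the one-dimensional Hermite-leapfrog scheme for $p_t=c\,v_x$, $v_t=c\,p_x$ (valid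 as a description of the scheme when $c\Delta t<h$). *)

From Stdlib Require Import Reals Lra List ClassicalEpsilon.
Open Scope R_scope.

Fixpoint peval (q : list R) (x : R) : R :=
  match q with
  | nil => 0
  | a :: t => a + x * peval t x
  end.

Fixpoint pderiv_aux (n : nat) (l : list R) : list R :=
  match l with
  | nil => nil
  | a :: t => (INR n * a) :: pderiv_aux (S n) t
  end.

(* formal derivative: [a0;a1;a2;...] |-> [1*a1; 2*a2; ...] *)
Definition pderiv (q : list R) : list R := pderiv_aux 1 (tl q).

Definition pderivn (k : nat) (q : list R) : list R := Nat.iter k pderiv q.

Lemma peval_continuity (q : list R) : continuity (peval q).
Proof.
  induction q as [|a t IH]; simpl.
  - apply continuity_const. intros x y; reflexivity.
  - change (continuity (fct_cte a + id * peval t)%F).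
    apply continuity_plus.
    + apply continuity_const. intros x y; reflexivity.
    + apply continuity_mult; [apply derivable_continuous, derivable_id | exact IH].
Qed.

Lemma sq_peval_continuity (q : list R) (x : R) :
  continuity_pt (fun y => peval q y * peval q y) x.
Proof.
  change (continuity_pt (peval q * peval q)%F x).
  apply continuity_pt_mult; apply peval_continuity.
Qed.

Definition sq_int (q : list R) (a b : R) : R :=
  match Rle_dec a b with
  | left H =>
      RiemannInt (@continuity_implies_RiemannInt
                    (fun y => peval q y * peval q y) a b H
                    (fun x _ => sq_peval_continuity q x))
  | right _ => 0
  end.

Definition has_derivs (m : nat) (f : R -> R) (ds : nat -> R -> R) : Prop :=
  (forall x, ds 0%nat x = f x) /\
  (forall k, (k < m)%nat -> forall x, derivable_pt_lim (ds k) x (ds (S k) x)).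

(* The primary
   grid has a = 0, the dual grid has a = h/2.  [HermiteInterp m K h a f g]
   says g is (the) Hermite interpolant of f of order m on this grid:
   g is (K h)-periodic, on each cell [a+jh, a+(j+1)h] it is a polynomial of
   degree <= 2m+1, and its value and first m derivatives agree with those
   of f at both endpoints of the cell. *)
Definition HermiteInterp (m K : nat) (h a : R) (f g : R -> R) : Prop :=
  (forall x, g (x + INR K * h) = g x) /\
  exists ds : nat -> R -> R, has_derivs m f ds /\
  exists q : nat -> list R,
    forall j, (j < K)%nat ->
      (length (q j) <= 2 * m + 2)%nat /\
      (forall x, a + INR j * h <= x <= a + INR (S j) * h -> g x = peval (q j) x) /\
      (forall k, (k <= m)%nat ->
         peval (pderivn k (q j)) (a + INR j * h) = ds k (a + INR j * h) /\
         peval (pderivn k (q j)) (a + INR (S j) * h) = ds k (a + INR (S j) * h)).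

Definition InRange (m K : nat) (h a : R) (g : R -> R) : Prop :=
  exists f, (forall x, f (x + INR K * h) = f x) /\ HermiteInterp m K h a f g.

Definition PPRep (L : R) (f : R -> R) (pts : list R) (qs : list (list R)) : Prop :=
  (2 <= length pts)%nat /\
  nth 0 pts 0 = 0 /\ last pts 0 = L /\
  (forall i, (S i < length pts)%nat -> nth i pts 0 < nth (S i) pts 0) /\
  length qs = pred (length pts) /\
  (forall i, (S i < length pts)%nat ->
     forall x, nth i pts 0 <= x <= nth (S i) pts 0 -> f x = peval (nth i qs nil) x).

Fixpoint pp_sum (m : nat) (pts : list R) (qs : list (list R)) : R :=
  match pts, qs with
  | t0 :: ((t1 :: _) as pts'), q :: qs' =>
      sq_int (pderivn (S m) q) t0 t1 + pp_sum m pts' qs'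
  | _, _ => 0
  end.

(* |f|_{m+1}^2 = \int_{T_L} |d^{m+1} f|^2 dx, for f a piecewise polynomial
   on [0,L] (the derivative is taken cell-wise, i.e. almost everywhere). *)
Definition seminorm_sq (m : nat) (L : R) (f : R -> R) : R :=
  epsilon (inhabits 0)
    (fun s => exists pts qs, PPRep L f pts qs /\ s = pp_sum m pts qs).

Definition Splus (c dt : R) (f : R -> R) : R -> R := fun x => f (x + c * dt / 2).
Definition Sminus (c dt : R) (f : R -> R) : R -> R := fun x => f (x - c * dt / 2).

From Pilot Require Import Defs.
From Stdlib Require Import Reals Lra Lia List Classical ClassicalEpsilon ZArith.
From Coquelicot Require Import Coquelicot.
Open Scope R_scope.

(* Write the half step as [w' = w + I (S+ f) - I (S- f)] and let [E] be the difference
   [(I (S+ f) - S+ f) - (I (S- f) - S- f)] of the two interpolation errors.  The new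
   characteristic variables are [w' - S+ f = (w - S- f) + E] and [w' + S- f = (w + S+ f) + E];
   expanding the squares, the cross terms add up to [2 <2 w + I (S+ f) - I (S- f), E>_{m+1}],
   which vanishes because interpolation errors are orthogonal to the interpolation range: on
   each cell, [m + 1] integrations by parts put all derivatives on a polynomial of degree
   [2 m + 1], and the boundary terms vanish since the error has [m] vanishing derivatives at
   the nodes.  What is left, [|w - S- f|^2 + |w + S+ f|^2], is a translate of
   [|f - S+ w|^2 + |f + S- w|^2], and the seminorm is translation invariant on the torus.
   Both half steps of the leapfrog scheme are of this form.

   The seminorm of [Defs] is chosen by epsilon among sums over subdivisions; for a piecewise
   polynomial, Cousin's lemma provides a subdivision, and every one gives the integral of the
   squared [(m+1)]-th derivative. *)

(** * Polynomials as coefficient lists *)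

Lemma peval_pderiv_aux_succ k l x :
  peval (pderiv_aux (S k) l) x = peval (pderiv_aux k l) x + peval l x.
Proof.
  revert k; induction l as [|b t IH]; intro k; cbn [peval pderiv_aux]; [lra|].
  rewrite IH, S_INR. ring.
Qed.

Lemma derivable_pt_lim_peval q x : derivable_pt_lim (peval q) x (peval (pderiv q) x).
Proof.
  induction q as [|a t IH].
  - apply derivable_pt_lim_const.
  - replace (peval (pderiv (a :: t)) x) with (0 + (1 * peval t x + x * peval (pderiv t) x)).
    + apply (derivable_pt_lim_plus (fun _ => a) (fun y => y * peval t y));
        [apply derivable_pt_lim_const|].
      apply (derivable_pt_lim_mult id (peval t)); [apply derivable_pt_lim_id|exact IH].
    + unfold pderiv; destruct t as [|b t]; cbn [peval pderiv_aux tl]; [lra|].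
      rewrite (peval_pderiv_aux_succ 1). cbn [peval pderiv_aux]. simpl INR. ring.
Qed.

Lemma is_derive_peval q x : is_derive (peval q) x (peval (pderiv q) x).
Proof. apply is_derive_Reals, derivable_pt_lim_peval. Qed.

Lemma continuous_peval q x : continuous (peval q) x.
Proof. apply continuity_pt_filterlim, peval_continuity. Qed.

Lemma Derive_n_peval k q x : Derive_n (peval q) k x = peval (pderivn k q) x.
Proof.
  revert x; induction k as [|k IH]; intro x; [reflexivity|].
  simpl Derive_n. rewrite (Derive_ext _ (peval (pderivn k q))) by exact IH.
  apply is_derive_unique, is_derive_peval.
Qed.

Lemma ex_derive_n_peval q k x : ex_derive_n (peval q) k x.
Proof.
  destruct k; [exact I|]. simpl.
  apply (ex_derive_ext (peval (pderivn k q))); [intro y; symmetry; apply Derive_n_peval|].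
  eexists; apply is_derive_peval.
Qed.

Lemma pderivn_length k q : length (pderivn k q) = (length q - k)%nat.
Proof.
  assert (Haux : forall n l, length (pderiv_aux n l) = length l)
    by (intros n l; revert n; induction l; simpl; auto).
  induction k as [|k IH]; [simpl; lia|].
  change (length (pderiv (pderivn k q)) = (length q - S k)%nat).
  unfold pderiv. rewrite Haux. revert IH. destruct (pderivn k q); simpl; lia.
Qed.

Lemma peval_pderivn_ge_length k q x : (length q <= k)%nat -> peval (pderivn k q) x = 0.
Proof.
  intro Hk. assert (Hl := pderivn_length k q).
  destruct (pderivn k q); [reflexivity|simpl in Hl; lia].
Qed.

Fixpoint padd (p q : list R) : list R :=
  match p, q with
  | nil, _ => q
  | _, nil => p
  | a :: p', b :: q' => (a + b) :: padd p' q'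
  end.

Lemma peval_padd p q x : peval (padd p q) x = peval p x + peval q x.
Proof. revert q; induction p as [|a p IH]; intros [|b q]; simpl; try ring. rewrite IH; ring. Qed.

Lemma padd_length p q : length (padd p q) = Nat.max (length p) (length q).
Proof. revert q; induction p as [|a p IH]; intros [|b q]; simpl; auto. Qed.

Definition pscal (c : R) (p : list R) : list R := map (Rmult c) p.

Lemma peval_pscal c p x : peval (pscal c p) x = c * peval p x.
Proof. induction p as [|a p IH]; simpl; [ring|]. rewrite IH; ring. Qed.

Lemma pscal_length c p : length (pscal c p) = length p.
Proof. apply length_map. Qed.

Fixpoint ptrans (s : R) (p : list R) : list R :=
  match p with
  | nil => nil
  | a :: t => padd (a :: nil) (padd (0 :: ptrans s t) (pscal s (ptrans s t)))
  end.

Lemma peval_ptrans s p x : peval (ptrans s p) x = peval p (x + s).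
Proof.
  induction p as [|a p IH]; cbn [ptrans peval]; [ring|].
  rewrite !peval_padd, peval_pscal. cbn [peval]. rewrite IH. ring.
Qed.

(** * Cousin's lemma *)

Inductive Chain (P : R -> R -> Prop) : R -> R -> Prop :=
| chain_one a b : a < b -> P a b -> Chain P a b
| chain_cons a t b : a < t -> P a t -> Chain P t b -> Chain P a b.

Lemma chain_snoc P a t b : Chain P a t -> t < b -> P t b -> Chain P a b.
Proof.
  induction 1; intros.
  - eapply chain_cons; eauto. apply chain_one; auto.
  - eapply chain_cons; eauto.
Qed.

Definition Local (P : R -> R -> Prop) : Prop :=
  forall x, exists d, 0 < d /\ (forall s, x - d < s < x -> P s x) /\
                      (forall t, x < t < x + d -> P x t).

Lemma Local_and P Q : Local P -> Local Q -> Local (fun s t => P s t /\ Q s t).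
Proof.
  intros HP HQ x. destruct (HP x) as [d1 [H1 [Hl1 Hr1]]], (HQ x) as [d2 [H2 [Hl2 Hr2]]].
  exists (Rmin d1 d2). assert (Rmin d1 d2 <= d1) by apply Rmin_l.
  assert (Rmin d1 d2 <= d2) by apply Rmin_r.
  split; [apply Rmin_case; lra|split; intros; split;
    [apply Hl1|apply Hl2|apply Hr1|apply Hr2]; lra].
Qed.

Lemma Local_impl (P Q : R -> R -> Prop) : (forall s t, P s t -> Q s t) -> Local P -> Local Q.
Proof. intros H HP x. destruct (HP x) as [d [? [? ?]]]. exists d; auto. Qed.

(* The supremum of the points reachable by a [P]-chain from [a] is reachable
   and cannot lie below [b]. *)
Lemma chain_of_Local P a b : a < b -> Local P -> Chain P a b.
Proof.
  intros Hab HL.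
  set (E := fun t => a < t <= b /\ Chain P a t).
  destruct (HL a) as [d0 [Hd0 [_ Hr0]]].
  set (t0 := a + Rmin d0 (b - a) / 2).
  assert (0 < Rmin d0 (b - a)) by (apply Rmin_case; lra).
  assert (Rmin d0 (b - a) <= d0) by apply Rmin_l.
  assert (Rmin d0 (b - a) <= b - a) by apply Rmin_r.
  assert (Et0 : E t0) by (split; [unfold t0; lra|apply chain_one; [unfold t0; lra|apply Hr0; unfold t0; lra]]).
  assert (Hbd : bound E) by (exists b; intros t [Ht _]; lra).
  destruct (completeness E Hbd (ex_intro _ t0 Et0)) as [T [HT1 HT2]].
  assert (Tb : T <= b) by (apply HT2; intros t [Ht _]; lra).
  assert (t0 <= T) by (apply HT1, Et0).
  destruct (HL T) as [d [Hd [Hl Hr]]].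
  assert (Hex : exists t, E t /\ T - d < t).
  { apply NNPP; intro Hn. enough (T <= T - d) by lra.
    apply HT2. intros t Et. apply Rnot_lt_le. intro Hlt. apply Hn. exists t; auto. }
  destruct Hex as [t [[Ht Ct] Htd]].
  assert (t <= T) by (apply HT1; split; auto).
  assert (CT : Chain P a T).
  { destruct (Req_dec t T) as [<-|Hne]; auto.
    apply (chain_snoc P a t T); auto; [lra|]. apply Hl. lra. }
  destruct (Req_dec T b) as [<-|Hne]; auto.
  exfalso.
  set (t' := T + Rmin d (b - T) / 2).
  assert (0 < Rmin d (b - T)) by (apply Rmin_case; lra).
  assert (Rmin d (b - T) <= d) by apply Rmin_l.
  assert (Rmin d (b - T) <= b - T) by apply Rmin_r.
  assert (Et' : E t').
  { split; [unfold t'; lra|]. apply (chain_snoc P a T); auto; [unfold t'; lra|].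
    apply Hr. unfold t'; lra. }
  enough (t' <= T) by (unfold t' in *; lra). apply HT1, Et'.
Qed.

Lemma is_RInt_chain_telescope P (phi F : R -> R) a b : Chain P a b ->
  (forall s t, P s t -> s < t -> is_RInt phi s t (F t - F s)) ->
  is_RInt phi a b (F b - F a).
Proof.
  intros C HP; induction C; [auto|].
  replace (F b - F a) with (plus (F t - F a) (F b - F t)) by (unfold plus; simpl; ring).
  apply (is_RInt_Chasles phi a t b); auto.
Qed.

Lemma ex_RInt_chain P (phi : R -> R) a b : Chain P a b ->
  (forall s t, P s t -> s < t -> ex_RInt phi s t) -> ex_RInt phi a b.
Proof. intros C H; induction C; [auto|]. eapply ex_RInt_Chasles; eauto. Qed.

Lemma RInt_ext_chain P (phi psi : R -> R) a b : Chain P a b ->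
  (forall s t, P s t -> forall x, s < x < t -> phi x = psi x) ->
  ex_RInt phi a b -> ex_RInt psi a b -> RInt phi a b = RInt psi a b.
Proof.
  intros C HP; induction C as [a b Hab Pab|a t b Hat Pat C IH]; intros Ephi Epsi.
  - apply RInt_ext. rewrite Rmin_left, Rmax_right by lra. apply HP, Pab.
  - assert (Htb : t < b) by (clear -C; induction C; lra).
    assert (Hatb : a <= t <= b) by lra.
    assert (E1 := ex_RInt_Chasles_1 (V:=R_CompleteNormedModule) _ a t b Hatb Ephi).
    assert (E2 := ex_RInt_Chasles_2 (V:=R_CompleteNormedModule) _ a t b Hatb Ephi).
    assert (E3 := ex_RInt_Chasles_1 (V:=R_CompleteNormedModule) _ a t b Hatb Epsi).
    assert (E4 := ex_RInt_Chasles_2 (V:=R_CompleteNormedModule) _ a t b Hatb Epsi).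
    rewrite <- (RInt_Chasles phi a t b), <- (RInt_Chasles psi a t b), IH by auto.
    rewrite (RInt_ext phi psi a t); [reflexivity|].
    rewrite Rmin_left, Rmax_right by lra. apply HP, Pat.
Qed.

(** * Piecewise polynomials *)

Definition PolyOn (f : R -> R) (s t : R) : Prop :=
  exists q, forall y, s <= y <= t -> f y = peval q y.

Definition PiecewisePoly (f : R -> R) : Prop := Local (PolyOn f).

Lemma PolyOn_plus f g s t : PolyOn f s t -> PolyOn g s t -> PolyOn (fun x => f x + g x) s t.
Proof. intros [q1 H1] [q2 H2]. exists (padd q1 q2). intros y Hy. rewrite peval_padd, H1, H2; auto. Qed.

Lemma PolyOn_scal c f s t : PolyOn f s t -> PolyOn (fun x => c * f x) s t.
Proof. intros [q H]. exists (pscal c q). intros y Hy. rewrite peval_pscal, H; auto. Qed.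

Lemma PiecewisePoly_ext f g : (forall x, f x = g x) -> PiecewisePoly f -> PiecewisePoly g.
Proof.
  intros E. apply Local_impl. intros s t [q H]. exists q. intros; rewrite <- E; auto.
Qed.

Lemma PiecewisePoly_plus f g :
  PiecewisePoly f -> PiecewisePoly g -> PiecewisePoly (fun x => f x + g x).
Proof.
  intros Hf Hg. apply (Local_impl _ _ (fun s t H => PolyOn_plus f g s t (proj1 H) (proj2 H))).
  apply Local_and; auto.
Qed.

Lemma PiecewisePoly_scal c f : PiecewisePoly f -> PiecewisePoly (fun x => c * f x).
Proof. apply Local_impl, PolyOn_scal. Qed.

Lemma PiecewisePoly_minus f g :
  PiecewisePoly f -> PiecewisePoly g -> PiecewisePoly (fun x => f x - g x).
Proof.
  intros Hf Hg. apply (PiecewisePoly_ext (fun x => f x + -1 * g x)); [intro; ring|].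
  apply PiecewisePoly_plus, PiecewisePoly_scal; auto.
Qed.

Lemma PiecewisePoly_shift f c : PiecewisePoly f -> PiecewisePoly (fun x => f (x + c)).
Proof.
  intros Hf x. destruct (Hf (x + c)) as [d [Hd [Hl Hr]]]. exists d; split; [auto|split].
  - intros s Hs. destruct (Hl (s + c)) as [q Hq]; [lra|].
    exists (ptrans c q). intros y Hy. rewrite peval_ptrans. apply Hq. lra.
  - intros t Ht. destruct (Hr (t + c)) as [q Hq]; [lra|].
    exists (ptrans c q). intros y Hy. rewrite peval_ptrans. apply Hq. lra.
Qed.

Lemma PiecewisePoly_peval q : PiecewisePoly (peval q).
Proof. intro x. exists 1. split; [lra|split; intros; exists q; auto]. Qed.

Lemma PiecewisePoly_Splus c dt f : PiecewisePoly f -> PiecewisePoly (Splus c dt f).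
Proof. apply PiecewisePoly_shift. Qed.

Lemma PiecewisePoly_Sminus c dt f : PiecewisePoly f -> PiecewisePoly (Sminus c dt f).
Proof.
  intro Hf. apply (PiecewisePoly_ext (fun x => f (x + - (c * dt / 2)))).
  - intro; unfold Sminus; f_equal; ring.
  - apply PiecewisePoly_shift, Hf.
Qed.

Lemma Splus_periodic L c dt f : (forall x, f (x + L) = f x) ->
  forall x, Splus c dt f (x + L) = Splus c dt f x.
Proof. intros Pf x. unfold Splus. rewrite <- (Pf (x + c * dt / 2)). f_equal; ring. Qed.

Lemma Sminus_periodic L c dt f : (forall x, f (x + L) = f x) ->
  forall x, Sminus c dt f (x + L) = Sminus c dt f x.
Proof. intros Pf x. unfold Sminus. rewrite <- (Pf (x - c * dt / 2)). f_equal; ring. Qed.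

(* The range of Hermite interpolation of order [m] on the grid [a0 + j h], [j < K],
   ignoring the smoothness at the nodes. *)
Definition GridPP (m K : nat) (h a0 : R) (u : R -> R) : Prop :=
  (forall x, u (x + INR K * h) = u x) /\
  exists q : nat -> list R, forall j, (j < K)%nat ->
     (length (q j) <= 2 * m + 2)%nat /\
     forall x, a0 + INR j * h <= x <= a0 + INR (S j) * h -> u x = peval (q j) x.

Lemma HermiteInterp_GridPP m K h a0 f g : HermiteInterp m K h a0 f g -> GridPP m K h a0 g.
Proof.
  intros [Hp [ds [_ [q Hq]]]]. split; auto. exists q. intros j Hj.
  destruct (Hq j Hj) as [H1 [H2 _]]. auto.
Qed.

Lemma InRange_GridPP m K h a0 g : InRange m K h a0 g -> GridPP m K h a0 g.
Proof. intros [f [_ H]]. eapply HermiteInterp_GridPP; eauto. Qed.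

Lemma GridPP_plus m K h a0 u v : GridPP m K h a0 u -> GridPP m K h a0 v ->
  GridPP m K h a0 (fun x => u x + v x).
Proof.
  intros [Pu [qu Hu]] [Pv [qv Hv]]. split; [intro; rewrite Pu, Pv; reflexivity|].
  exists (fun j => padd (qu j) (qv j)). intros j Hj.
  destruct (Hu j Hj) as [Lu Eu], (Hv j Hj) as [Lv Ev].
  split; [rewrite padd_length; lia|]. intros x Hx. rewrite peval_padd, Eu, Ev; auto.
Qed.

Lemma GridPP_scal m K h a0 c u : GridPP m K h a0 u -> GridPP m K h a0 (fun x => c * u x).
Proof.
  intros [Pu [qu Hu]]. split; [intro; rewrite Pu; reflexivity|].
  exists (fun j => pscal c (qu j)). intros j Hj. destruct (Hu j Hj) as [Lu Eu].
  split; [rewrite pscal_length; lia|]. intros x Hx. rewrite peval_pscal, Eu; auto.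
Qed.

Lemma periodic_IZR (g : R -> R) L : (forall x, g (x + L) = g x) ->
  forall z x, g (x + IZR z * L) = g x.
Proof.
  intros Hp.
  assert (Hn : forall n x, g (x + INR n * L) = g x).
  { induction n as [|n IH]; intro x; [simpl; f_equal; ring|].
    rewrite S_INR. replace (x + (INR n + 1) * L) with ((x + INR n * L) + L) by ring.
    rewrite Hp. apply IH. }
  intros z x. destruct (Z.le_gt_cases 0 z) as [Hz|Hz].
  - rewrite <- (Z2Nat.id z Hz), <- INR_IZR_INZ. apply Hn.
  - replace z with (- Z.of_nat (Z.to_nat (- z)))%Z by lia.
    rewrite opp_IZR, <- INR_IZR_INZ.
    rewrite <- (Hn (Z.to_nat (-z)) (x + - INR (Z.to_nat (- z)) * L)). f_equal; ring.
Qed.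

Lemma GridPP_PolyOn_cell m K h a0 u : (1 <= K)%nat -> 0 < h -> GridPP m K h a0 u ->
  forall k : Z, PolyOn u (a0 + IZR k * h) (a0 + (IZR k + 1) * h).
Proof.
  intros HK Hh [Hp [q Hq]] k.
  set (z := (k / Z.of_nat K)%Z). set (r := (k mod Z.of_nat K)%Z).
  assert (Hr : (0 <= r < Z.of_nat K)%Z) by (apply Z.mod_pos_bound; lia).
  assert (Hk : k = (Z.of_nat K * z + r)%Z) by (apply Z.div_mod; lia).
  set (j := Z.to_nat r).
  assert (Hj : (j < K)%nat) by lia.
  assert (HIk : IZR k = INR K * IZR z + INR j).
  { rewrite Hk, plus_IZR, mult_IZR, <- INR_IZR_INZ. unfold j.
    rewrite (INR_IZR_INZ (Z.to_nat r)), Z2Nat.id by lia. reflexivity. }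
  exists (ptrans (- (IZR z * (INR K * h))) (q j)). intros y Hy.
  rewrite peval_ptrans. transitivity (u (y + - (IZR z * (INR K * h)))).
  { rewrite <- (periodic_IZR u _ Hp z (y + - (IZR z * (INR K * h)))). f_equal; ring. }
  apply Hq; auto. rewrite S_INR. rewrite HIk in Hy. split; nra.
Qed.

Lemma GridPP_PiecewisePoly m K h a0 u : (1 <= K)%nat -> 0 < h -> GridPP m K h a0 u ->
  PiecewisePoly u.
Proof.
  intros HK Hh Hu x. set (y := (x - a0) / h).
  assert (Hx : x = a0 + y * h) by (unfold y; field; lra).
  destruct (archimed y) as [A1 A2], (archimed (- y)) as [B1 B2].
  (* Cell [k1] extends strictly to the right of [x], cell [k2] strictly to its left. *)
  set (k1 := (up y - 1)%Z). set (k2 := (- up (- y))%Z).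
  assert (K1 : IZR k1 = IZR (up y) - 1) by (unfold k1; rewrite minus_IZR; reflexivity).
  assert (K2 : IZR k2 = - IZR (up (- y))) by (unfold k2; rewrite opp_IZR; reflexivity).
  destruct (GridPP_PolyOn_cell m K h a0 u HK Hh Hu k1) as [q1 Hq1].
  destruct (GridPP_PolyOn_cell m K h a0 u HK Hh Hu k2) as [q2 Hq2].
  set (d := Rmin (a0 + (IZR k1 + 1) * h - x) (x - (a0 + IZR k2 * h))).
  assert (D1 : d <= a0 + (IZR k1 + 1) * h - x) by apply Rmin_l.
  assert (D2 : d <= x - (a0 + IZR k2 * h)) by apply Rmin_r.
  assert (E1 : 0 < a0 + (IZR k1 + 1) * h - x) by (rewrite K1, Hx; nra).
  assert (E2 : 0 < x - (a0 + IZR k2 * h)) by (rewrite K2, Hx; nra).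
  exists d. split; [unfold d; apply Rmin_case; lra|split].
  - intros s Hs. exists q2. intros t Ht. apply Hq2. split; [lra|rewrite K2, Hx in *; nra].
  - intros t Ht. exists q1. intros w Hw. apply Hq1. split; [rewrite K1, Hx in *; nra|lra].
Qed.

(** * The semi-inner product [<f, g>_{m+1}] *)

Lemma locally_interior (P : R -> Prop) s t x :
  s < x < t -> (forall y, s <= y <= t -> P y) -> locally x P.
Proof.
  intros Hx H. assert (Hd : 0 < Rmin (x - s) (t - x)) by (apply Rmin_case; lra).
  exists (mkposreal _ Hd). intros y Hy. apply H.
  unfold ball in Hy; simpl in Hy; unfold AbsRing_ball, abs, minus, plus, opp in Hy; simpl in Hy.
  apply Rabs_def2 in Hy.
  assert (Rmin (x - s) (t - x) <= x - s) by apply Rmin_l.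
  assert (Rmin (x - s) (t - x) <= t - x) by apply Rmin_r. lra.
Qed.

Definition PPRepOn (a b : R) (f : R -> R) (pts : list R) (qs : list (list R)) : Prop :=
  (2 <= length pts)%nat /\
  nth 0 pts 0 = a /\ last pts 0 = b /\
  (forall i, (S i < length pts)%nat -> nth i pts 0 < nth (S i) pts 0) /\
  length qs = pred (length pts) /\
  (forall i, (S i < length pts)%nat ->
     forall x, nth i pts 0 <= x <= nth (S i) pts 0 -> f x = peval (nth i qs nil) x).

Lemma PPRepOn_of_chain f a b : Chain (PolyOn f) a b -> exists pts qs, PPRepOn a b f pts qs.
Proof.
  induction 1 as [a b Hab [q Hq]|a t b Hat [q Hq] C [pts [qs [H1 [H2 [H3 [H4 [H5 H6]]]]]]]].
  - exists (a :: b :: nil), (q :: nil). repeat split; simpl; auto.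
    + intros [|i] Hi; simpl in *; [lra|lia].
    + intros [|i] Hi x Hx; simpl in *; [auto|lia].
  - exists (a :: pts), (q :: qs).
    destruct pts as [|t0 pts]; [simpl in H1; lia|]. simpl in H2; subst t0.
    repeat split.
    + simpl in *; lia.
    + destruct pts; [simpl in H1; lia|]. exact H3.
    + intros [|i] Hi; simpl; [exact Hat|]. apply H4. simpl in *; lia.
    + simpl in *; lia.
    + intros [|i] Hi x Hx; simpl in *; [auto|]. apply H6; auto; lia.
Qed.

Lemma sq_int_RInt q a b : a <= b -> sq_int q a b = RInt (fun y => peval q y * peval q y) a b.
Proof.
  intro Hab. unfold sq_int. destruct (Rle_dec a b) as [H|]; [|lra].
  symmetry. apply RInt_Reals.
Qed.

Section SemiInnerProduct.

Variable m : nat.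

(* [Derive_n] is total: at the breakpoints of a piecewise polynomial it returns junk, so
   linearity of [D] only holds on cell interiors. *)
Definition D (f : R -> R) (x : R) : R := Derive_n f (S m) x.

Lemma D_ext f g x : (forall y, f y = g y) -> D f x = D g x.
Proof. intro H; apply Derive_n_ext, H. Qed.

Lemma D_scal c f x : D (fun y => c * f y) x = c * D f x.
Proof. apply Derive_n_scal_l. Qed.

Lemma D_shift f c x : D (fun y => f (y + c)) x = D f (x + c).
Proof. apply Derive_n_comp_trans. Qed.

Lemma D_periodic f L x : (forall y, f (y + L) = f y) -> D f (x + L) = D f x.
Proof. intro H. unfold D. rewrite <- Derive_n_comp_trans. apply Derive_n_ext, H. Qed.

Lemma D_peval_interior f q s t x : (forall y, s <= y <= t -> f y = peval q y) -> s < x < t ->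
  D f x = peval (pderivn (S m) q) x.
Proof.
  intros H Hx. rewrite <- Derive_n_peval. apply Derive_n_ext_loc.
  apply (locally_interior _ s t); auto.
Qed.

Lemma D_plus_interior f g s t x : PolyOn f s t -> PolyOn g s t -> s < x < t ->
  D (fun y => f y + g y) x = D f x + D g x.
Proof.
  intros [q1 H1] [q2 H2] Hx. unfold D.
  rewrite (Derive_n_ext_loc (fun y => f y + g y) (fun y => peval q1 y + peval q2 y)),
    (Derive_n_ext_loc f (peval q1)), (Derive_n_ext_loc g (peval q2));
    try (apply (locally_interior _ s t); auto; intros y Hy; rewrite H1, H2; auto).
  apply Derive_n_plus; apply filter_forall; intros; apply ex_derive_n_peval.
Qed.

Lemma ex_RInt_D_mult f g a b : PiecewisePoly f -> PiecewisePoly g ->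
  ex_RInt (fun x => D f x * D g x) a b.
Proof.
  intros Hf Hg.
  assert (Hlt : forall a b, a < b -> ex_RInt (fun x => D f x * D g x) a b).
  { clear a b. intros a b Hab.
    apply (ex_RInt_chain _ _ a b (chain_of_Local _ a b Hab (Local_and _ _ Hf Hg))).
    intros s t [[q1 H1] [q2 H2]] Hst.
    apply (ex_RInt_ext (fun x => peval (pderivn (S m) q1) x * peval (pderivn (S m) q2) x)).
    { rewrite Rmin_left, Rmax_right by lra. intros x Hx.
      rewrite (D_peval_interior f q1 s t), (D_peval_interior g q2 s t); auto. }
    apply (ex_RInt_continuous (V:=R_CompleteNormedModule)). intros z _.
    apply (continuous_mult (peval _) (peval _)); apply continuous_peval. }
  destruct (Rtotal_order a b) as [H|[<-|H]].
  - auto.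
  - apply ex_RInt_point.
  - apply ex_RInt_swap; auto.
Qed.

(* [sip 0 L f g] is [<f, g>_{m+1}] on the torus of length [L]. *)
Definition sip (a b : R) (f g : R -> R) : R := RInt (fun x => D f x * D g x) a b.

Lemma pp_sum_sip a b f pts qs : PiecewisePoly f -> PPRepOn a b f pts qs ->
  pp_sum m pts qs = sip a b f f.
Proof.
  intro Hf. revert a qs.
  induction pts as [|t0 pts IH]; intros a qs [H1 [H2 [H3 [H4 [H5 H6]]]]]; [simpl in H1; lia|].
  destruct pts as [|t1 rest]; [simpl in H1; lia|].
  destruct qs as [|q qs]; [simpl in H5; lia|].
  simpl in H2; subst t0.
  assert (Hlt : a < t1) by (apply (H4 0%nat); simpl; lia).
  assert (Cell : sq_int (pderivn (S m) q) a t1 = sip a t1 f f).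
  { rewrite sq_int_RInt by lra. apply RInt_ext.
    rewrite Rmin_left, Rmax_right by lra. intros x Hx.
    rewrite (D_peval_interior f q a t1); auto.
    intros y Hy. apply (H6 0%nat); simpl; [lia|exact Hy]. }
  destruct rest as [|t2 rest].
  - simpl in H3; subst t1. simpl. rewrite Rplus_0_r. exact Cell.
  - change (pp_sum m (a :: t1 :: t2 :: rest) (q :: qs)) with
      (sq_int (pderivn (S m) q) a t1 + pp_sum m (t1 :: t2 :: rest) qs).
    rewrite Cell, (IH t1 qs).
    + unfold sip. rewrite <- (RInt_Chasles _ a t1 b); auto; apply ex_RInt_D_mult; auto.
    + split; [simpl; lia|]. split; [reflexivity|]. split; [exact H3|].
      split; [intros i Hi; apply (H4 (S i)); simpl in *; lia|].
      split; [simpl in *; lia|].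
      intros i Hi x Hx. apply (H6 (S i)); auto. simpl in *; lia.
Qed.

Lemma seminorm_sq_sip L f : 0 < L -> PiecewisePoly f -> seminorm_sq m L f = sip 0 L f f.
Proof.
  intros HL Hf.
  destruct (PPRepOn_of_chain f 0 L (chain_of_Local _ 0 L HL Hf)) as [pts [qs Hr]].
  unfold seminorm_sq.
  destruct (epsilon_spec (inhabits 0)
    (fun s => exists pts qs, PPRep L f pts qs /\ s = pp_sum m pts qs)) as [pts' [qs' [Hr' ->]]].
  - exists (pp_sum m pts qs), pts, qs. split; auto.
  - apply (pp_sum_sip 0 L f pts' qs' Hf Hr').
Qed.

Lemma sip_sym a b f g : sip a b f g = sip a b g f.
Proof. apply RInt_ext. intros; apply Rmult_comm. Qed.

Lemma sip_ext a b f f' g g' :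
  (forall y, f y = f' y) -> (forall y, g y = g' y) -> sip a b f g = sip a b f' g'.
Proof. intros H1 H2. apply RInt_ext. intros. rewrite (D_ext f f'), (D_ext g g'); auto. Qed.

Lemma sip_scal_l a b c f g : PiecewisePoly f -> PiecewisePoly g ->
  sip a b (fun y => c * f y) g = c * sip a b f g.
Proof.
  intros Hf Hg. unfold sip.
  rewrite (RInt_ext _ (fun x => scal c (D f x * D g x))).
  - rewrite (RInt_scal (V:=R_CompleteNormedModule)) by (apply ex_RInt_D_mult; auto). reflexivity.
  - intros. rewrite D_scal. unfold scal; simpl; unfold mult; simpl. ring.
Qed.

Lemma sip_plus_l a b f g k : a < b -> PiecewisePoly f -> PiecewisePoly g -> PiecewisePoly k ->
  sip a b (fun y => f y + g y) k = sip a b f k + sip a b g k.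
Proof.
  intros Hab Hf Hg Hk. unfold sip.
  rewrite <- (RInt_plus (V:=R_CompleteNormedModule)) by (apply ex_RInt_D_mult; auto).
  apply (RInt_ext_chain _ _ _ a b (chain_of_Local _ a b Hab (Local_and _ _ Hf Hg))).
  - intros s t [H1 H2] x Hx. rewrite (D_plus_interior f g s t x) by auto.
    unfold plus; simpl. ring.
  - apply ex_RInt_D_mult; auto. apply PiecewisePoly_plus; auto.
  - apply (ex_RInt_plus (V:=R_CompleteNormedModule)); apply ex_RInt_D_mult; auto.
Qed.

Lemma sip_window a L f g : PiecewisePoly f -> PiecewisePoly g ->
  (forall y, f (y + L) = f y) -> (forall y, g (y + L) = g y) ->
  sip a (a + L) f g = sip 0 L f g.
Proof.
  intros Hf Hg Pf Pg. unfold sip.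
  set (phi := fun x => D f x * D g x).
  assert (Ex : forall s t, ex_RInt phi s t) by (intros; apply ex_RInt_D_mult; auto).
  rewrite <- (RInt_Chasles phi a 0 (a + L)), <- (RInt_Chasles phi 0 L (a + L)) by auto.
  assert (Hshift : RInt phi L (a + L) = RInt phi 0 a).
  { replace L with (1 * 0 + L) at 1 by ring. replace (a + L) with (1 * a + L) by ring.
    rewrite <- (RInt_comp_lin phi 1 L 0 a) by auto.
    apply RInt_ext. intros x _. unfold phi, scal; simpl; unfold mult; simpl.
    rewrite !Rmult_1_l, !D_periodic; auto. }
  rewrite Hshift, <- (opp_RInt_swap phi 0 a) by auto.
  unfold plus, opp; simpl. ring.
Qed.

Lemma sip_shift L c f g : PiecewisePoly f -> PiecewisePoly g ->
  (forall y, f (y + L) = f y) -> (forall y, g (y + L) = g y) ->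
  sip 0 L (fun x => f (x + c)) (fun x => g (x + c)) = sip 0 L f g.
Proof.
  intros Hf Hg Pf Pg. rewrite <- (sip_window c L f g) by auto. unfold sip.
  assert (H := RInt_comp_lin (V:=R_CompleteNormedModule) (fun x => D f x * D g x) 1 c 0 L
    (ex_RInt_D_mult f g _ _ Hf Hg)).
  replace (1 * 0 + c) with c in H by ring. replace (1 * L + c) with (c + L) in H by ring.
  rewrite <- H. apply RInt_ext. intros x _. unfold scal; simpl; unfold mult; simpl.
  rewrite !D_shift, !Rmult_1_l. reflexivity.
Qed.

End SemiInnerProduct.

(** * Orthogonality of interpolation errors *)

Lemma derivable_pt_lim_unique_on f g s t x l1 l2 : s < t -> s <= x <= t ->
  (forall y, s <= y <= t -> f y = g y) ->
  derivable_pt_lim f x l1 -> derivable_pt_lim g x l2 -> l1 = l2.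
Proof.
  intros Hst Hx Heq H1 H2. destruct (Req_dec l1 l2) as [|Hne]; auto. exfalso.
  assert (He : 0 < Rabs (l1 - l2) / 2) by (assert (0 < Rabs (l1 - l2)) by (apply Rabs_pos_lt; lra); lra).
  destruct (H1 _ He) as [d1 Hd1], (H2 _ He) as [d2 Hd2].
  set (r := Rmin (Rmin d1 d2) (t - s) / 2).
  assert (Rmin (Rmin d1 d2) (t - s) <= Rmin d1 d2) by apply Rmin_l.
  assert (Rmin (Rmin d1 d2) (t - s) <= t - s) by apply Rmin_r.
  assert (Rmin d1 d2 <= d1) by apply Rmin_l.
  assert (Rmin d1 d2 <= d2) by apply Rmin_r.
  assert (0 < Rmin (Rmin d1 d2) (t - s))
    by (apply Rmin_case; [apply Rmin_case; apply cond_pos|lra]).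
  set (dx := if Rle_dec (x + r) t then r else - r).
  assert (Hdx : dx <> 0 /\ Rabs dx < d1 /\ Rabs dx < d2 /\ s <= x + dx <= t).
  { unfold dx, r in *; destruct (Rle_dec _ t);
      [rewrite Rabs_right by lra|rewrite Rabs_left by lra];
      (split; [intro; lra|split; [lra|split; [lra|split; lra]]]). }
  destruct Hdx as [Hdx0 [Hdx1 [Hdx2 Hdx3]]].
  specialize (Hd1 dx Hdx0 Hdx1). specialize (Hd2 dx Hdx0 Hdx2).
  rewrite (Heq (x + dx)), (Heq x) in Hd1 by lra.
  apply Rabs_def2 in Hd1. apply Rabs_def2 in Hd2.
  unfold Rabs in *. destruct (Rcase_abs (l1 - l2)); lra.
Qed.

Lemma has_derivs_minus m f g df dg : has_derivs m f df -> has_derivs m g dg ->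
  has_derivs m (fun x => f x - g x) (fun k x => df k x - dg k x).
Proof.
  intros [F0 FS] [G0 GS]. split; [intros; rewrite F0, G0; auto|].
  intros k Hk x. apply (derivable_pt_lim_minus (df k) (dg k)); auto.
Qed.

Lemma has_derivs_peval m q : has_derivs m (peval q) (fun k => peval (pderivn k q)).
Proof. split; [reflexivity|]. intros k _ x. apply derivable_pt_lim_peval. Qed.

Lemma has_derivs_on_piece m f ds r s t : has_derivs m f ds -> s < t ->
  (forall y, s <= y <= t -> f y = peval r y) ->
  forall j, (j <= m)%nat -> forall y, s <= y <= t -> ds j y = peval (pderivn j r) y.
Proof.
  intros [H0 HS] Hst Hr j. induction j as [|j IH]; intros Hj y Hy.
  - rewrite H0. auto.
  - apply (derivable_pt_lim_unique_on (ds j) (peval (pderivn j r)) s t y _ _ Hst Hy).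
    + intros; apply IH; auto; lia.
    + apply HS; lia.
    + apply derivable_pt_lim_peval.
Qed.

(* [G j] pairs the [(2m+2-j)]-th derivative of [U] with the [j]-th derivative of [d]
   ([D m d] for [j = m + 1]); integration by parts gives [G j + G (S j) = 0], and [G 0 = 0]. *)
Section HermiteCell.

Variables (m : nat) (U : list R) (d : R -> R) (ds : nat -> R -> R) (al be : R).
Hypotheses (Hab : al < be) (HU : (length U <= 2 * m + 2)%nat) (Hd : PiecewisePoly d)
  (Hds : has_derivs m d ds) (Hnodes : forall j, (j <= m)%nat -> ds j al = 0 /\ ds j be = 0).

Let dd (j : nat) (x : R) : R := if Nat.leb j m then ds j x else D m d x.

Let U' (j : nat) (x : R) : R := peval (pderivn (2 * m + 2 - j) U) x.

Let G (j : nat) : R := RInt (fun x => U' j x * dd j x) al be.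

Lemma dd_on_piece r s t j x : s < t -> (forall y, s <= y <= t -> d y = peval r y) ->
  (j <= S m)%nat -> s < x < t -> dd j x = peval (pderivn j r) x.
Proof.
  intros Hst Hr Hj Hx. unfold dd. destruct (Nat.leb_spec j m).
  - apply (has_derivs_on_piece m d ds r s t); auto; lra.
  - replace j with (S m) by lia. apply (D_peval_interior m d r s t); auto.
Qed.

Lemma ex_RInt_cell_integrand j : (j <= S m)%nat -> ex_RInt (fun x => U' j x * dd j x) al be.
Proof.
  intro Hj. apply (ex_RInt_chain _ _ al be (chain_of_Local _ al be Hab Hd)).
  intros s t [r Hr] Hst.
  apply (ex_RInt_ext (fun x => U' j x * peval (pderivn j r) x)).
  { rewrite Rmin_left, Rmax_right by lra. intros x Hx. rewrite (dd_on_piece r s t); auto. }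
  apply (ex_RInt_continuous (V:=R_CompleteNormedModule)). intros z _.
  apply (continuous_mult (U' j) (peval _)); apply continuous_peval.
Qed.

Lemma G_0 : G 0 = 0.
Proof.
  unfold G. rewrite (RInt_ext _ (fun _ => 0)).
  - rewrite RInt_const. unfold scal; simpl; unfold mult; simpl. ring.
  - intros x _. unfold U'. rewrite peval_pderivn_ge_length by lia. apply Rmult_0_l.
Qed.

Lemma G_succ j : (j <= m)%nat -> G j + G (S j) = 0.
Proof.
  intro Hj.
  set (F := fun x => U' (S j) x * ds j x).
  assert (Hibp : is_RInt (fun x => U' j x * dd j x + U' (S j) x * dd (S j) x) al be
                   (F be - F al)).
  { apply (is_RInt_chain_telescope _ _ F al be (chain_of_Local _ al be Hab Hd)).
    intros s t [r Hr] Hst.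
    set (F0 := fun x => U' (S j) x * peval (pderivn j r) x).
    assert (EF : forall x, s <= x <= t -> F x = F0 x).
    { intros x Hx. unfold F, F0. rewrite (has_derivs_on_piece m d ds r s t); auto. }
    rewrite !EF by lra.
    apply (is_RInt_ext (fun x => U' j x * peval (pderivn j r) x
                                 + U' (S j) x * peval (pderivn (S j) r) x)).
    { rewrite Rmin_left, Rmax_right by lra. intros x Hx.
      rewrite !(dd_on_piece r s t) by (auto; lia). reflexivity. }
    apply (is_RInt_derive F0).
    - intros x _. unfold F0, U'.
      replace (2 * m + 2 - j)%nat with (S (2 * m + 2 - S j)) by lia.
      apply (is_derive_mult (K:=R_AbsRing)); try apply is_derive_peval.
      intros; apply Rmult_comm.
    - intros x _. apply (continuous_plus (V:=R_NormedModule));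
        apply (continuous_mult (K:=R_AbsRing)); apply continuous_peval. }
  assert (HF : F be - F al = 0).
  { unfold F. destruct (Hnodes j Hj) as [N1 N2]. rewrite N1, N2. ring. }
  rewrite HF in Hibp. apply (is_RInt_unique (V:=R_CompleteNormedModule)) in Hibp.
  rewrite (RInt_plus (V:=R_CompleteNormedModule)) in Hibp
    by (apply ex_RInt_cell_integrand; lia).
  exact Hibp.
Qed.

Lemma RInt_cell_orthogonal : RInt (fun x => peval (pderivn (S m) U) x * D m d x) al be = 0.
Proof.
  assert (HG : forall j, (j <= S m)%nat -> G j = 0).
  { induction j as [|j IH]; intro Hj; [apply G_0|].
    assert (H := G_succ j ltac:(lia)). rewrite IH in H by lia. lra. }
  rewrite <- (HG (S m) (le_n _)). apply RInt_ext. intros x _. unfold U', dd.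
  replace (2 * m + 2 - S m)%nat with (S m) by lia.
  destruct (Nat.leb_spec (S m) m); [lia|reflexivity].
Qed.

End HermiteCell.

Lemma sip_interpolation_error m K h a0 u f g : (1 <= K)%nat -> 0 < h ->
  GridPP m K h a0 u -> PiecewisePoly f -> (forall x, f (x + INR K * h) = f x) ->
  HermiteInterp m K h a0 f g ->
  sip m 0 (INR K * h) u (fun x => g x - f x) = 0.
Proof.
  intros HK Hh Hu Hf Pf Hg.
  assert (PWu : PiecewisePoly u) by (apply (GridPP_PiecewisePoly m K h a0); auto).
  assert (PWe : PiecewisePoly (fun x => g x - f x)).
  { apply PiecewisePoly_minus; auto.
    apply (GridPP_PiecewisePoly m K h a0); auto. eapply HermiteInterp_GridPP; eauto. }
  rewrite <- (sip_window m a0 (INR K * h)) by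
    (auto; try apply Hu; intro; destruct Hg as [Pg _]; rewrite Pg, Pf; reflexivity).
  destruct Hu as [_ [qu Hqu]], Hg as [_ [df [Hdf [q Hq]]]].
  assert (Cell : forall j, (j < K)%nat ->
    sip m (a0 + INR j * h) (a0 + INR (S j) * h) u (fun x => g x - f x) = 0).
  { intros j Hj.
    destruct (Hqu j Hj) as [HUl HU], (Hq j Hj) as [_ [Hgq Hnodes]].
    set (al := a0 + INR j * h). set (be := a0 + INR (S j) * h).
    assert (Hab : al < be) by (unfold al, be; rewrite S_INR; nra).
    rewrite <- (RInt_cell_orthogonal m (qu j) (fun x => peval (q j) x - f x)
      (fun k x => peval (pderivn k (q j)) x - df k x) al be Hab HUl).
    - apply RInt_ext. rewrite Rmin_left, Rmax_right by lra. intros x Hx.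
      rewrite (D_peval_interior m u (qu j) al be x) by auto. f_equal.
      apply Derive_n_ext_loc, (locally_interior _ al be x Hx).
      intros y Hy. rewrite Hgq by auto. reflexivity.
    - apply PiecewisePoly_minus; [apply PiecewisePoly_peval|auto].
    - apply has_derivs_minus; [apply has_derivs_peval|auto].
    - intros k Hk. destruct (Hnodes k Hk) as [N1 N2]. fold al be in N1, N2.
      rewrite N1, N2. split; ring. }
  assert (Sum : forall n, (n <= K)%nat ->
     sip m a0 (a0 + INR n * h) u (fun x => g x - f x) = 0).
  { induction n as [|n IH]; intro Hn.
    - simpl. rewrite Rmult_0_l, Rplus_0_r. apply (RInt_point (V:=R_CompleteNormedModule)).
    - unfold sip. rewrite <- (RInt_Chasles (V:=R_CompleteNormedModule) _ a0 (a0 + INR n * h))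
        by (apply ex_RInt_D_mult; auto).
      fold (sip m a0 (a0 + INR n * h) u (fun x => g x - f x)).
      fold (sip m (a0 + INR n * h) (a0 + INR (S n) * h) u (fun x => g x - f x)).
      rewrite IH, Cell by lia. unfold plus; simpl. ring. }
  apply Sum. lia.
Qed.

(** * Energy conservation *)

Section Energy.

Variable m : nat.

Lemma sip_plus_r a b f g k : a < b -> PiecewisePoly f -> PiecewisePoly g -> PiecewisePoly k ->
  sip m a b k (fun y => f y + g y) = sip m a b k f + sip m a b k g.
Proof. intros. rewrite !(sip_sym m a b k). apply sip_plus_l; auto. Qed.

Lemma sip_scal_r a b c f g : PiecewisePoly f -> PiecewisePoly g ->
  sip m a b g (fun y => c * f y) = c * sip m a b g f.
Proof. intros. rewrite !(sip_sym m a b g). apply sip_scal_l; auto. Qed.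

Lemma sip_energy_split a b X Y E : a < b ->
  PiecewisePoly X -> PiecewisePoly Y -> PiecewisePoly E ->
  sip m a b (fun y => X y + E y) (fun y => X y + E y)
  + sip m a b (fun y => Y y + E y) (fun y => Y y + E y)
  = sip m a b X X + sip m a b Y Y + 2 * sip m a b (fun y => X y + Y y + E y) E.
Proof.
  intros Hab HX HY HE.
  assert (HXE := PiecewisePoly_plus X E HX HE).
  assert (HYE := PiecewisePoly_plus Y E HY HE).
  assert (HXY := PiecewisePoly_plus X Y HX HY).
  rewrite !sip_plus_l, !sip_plus_r by auto.
  rewrite (sip_sym m a b E X), (sip_sym m a b E Y). ring.
Qed.

Lemma sip_shifted_characteristics L c dt w f :
  PiecewisePoly w -> PiecewisePoly f ->
  (forall x, w (x + L) = w x) -> (forall x, f (x + L) = f x) ->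
  sip m 0 L (fun x => w x - Sminus c dt f x) (fun x => w x - Sminus c dt f x)
  + sip m 0 L (fun x => w x + Splus c dt f x) (fun x => w x + Splus c dt f x)
  = sip m 0 L (fun x => f x - Splus c dt w x) (fun x => f x - Splus c dt w x)
  + sip m 0 L (fun x => f x + Sminus c dt w x) (fun x => f x + Sminus c dt w x).
Proof.
  intros Hw Hf Pw Pf.
  set (s := c * dt / 2).
  set (F := fun x => f x - Splus c dt w x). set (G := fun x => f x + Sminus c dt w x).
  assert (PWX : PiecewisePoly (fun x => w x - Sminus c dt f x))
    by (apply PiecewisePoly_minus; [|apply PiecewisePoly_Sminus]; auto).
  assert (HF : sip m 0 L (fun x => w x - Sminus c dt f x) (fun x => w x - Sminus c dt f x)
               = sip m 0 L F F).
  { rewrite <- (sip_shift m L (- s) F F)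
      by (unfold F; auto using PiecewisePoly_minus, PiecewisePoly_Splus, Splus_periodic;
          intro; rewrite Pf, Splus_periodic; auto).
    rewrite (sip_ext m 0 L (fun x => F (x + - s)) (fun x => -1 * (w x - Sminus c dt f x))
                           (fun x => F (x + - s)) (fun x => -1 * (w x - Sminus c dt f x)))
      by (intro y; unfold F, Sminus, Splus, s; rewrite Rplus_assoc, Rplus_opp_l, Rplus_0_r;
          unfold Rminus; ring).
    rewrite sip_scal_l, sip_scal_r by auto using PiecewisePoly_scal. ring. }
  assert (HG : sip m 0 L (fun x => w x + Splus c dt f x) (fun x => w x + Splus c dt f x)
               = sip m 0 L G G).
  { rewrite <- (sip_shift m L s G G)
      by (unfold G; auto using PiecewisePoly_plus, PiecewisePoly_Sminus;
          intro; rewrite Pf, Sminus_periodic; auto).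
    apply sip_ext; intro y; unfold G, Sminus, Splus, s;
      replace (y + c * dt / 2 - c * dt / 2) with y by ring; ring. }
  rewrite HF, HG. reflexivity.
Qed.

Lemma sip_interpolation_errors K h a0 u f1 g1 f2 g2 : (1 <= K)%nat -> 0 < h ->
  GridPP m K h a0 u -> PiecewisePoly f1 -> PiecewisePoly f2 ->
  (forall x, f1 (x + INR K * h) = f1 x) -> (forall x, f2 (x + INR K * h) = f2 x) ->
  HermiteInterp m K h a0 f1 g1 -> HermiteInterp m K h a0 f2 g2 ->
  sip m 0 (INR K * h) u (fun x => (g1 x - f1 x) + -1 * (g2 x - f2 x)) = 0.
Proof.
  intros HK Hh Hu Hf1 Hf2 P1 P2 Hg1 Hg2.
  assert (Hgp := fun g f Hg => GridPP_PiecewisePoly m K h a0 g HK Hh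
                                 (HermiteInterp_GridPP m K h a0 f g Hg)).
  rewrite sip_plus_r, sip_scal_r, (sip_interpolation_error m K h a0 u f1 g1),
    (sip_interpolation_error m K h a0 u f2 g2);
    eauto using PiecewisePoly_minus, PiecewisePoly_scal, GridPP_PiecewisePoly; [ring|].
  assert (1 <= INR K) by (apply (le_INR 1); auto). nra.
Qed.

Lemma half_step_energy K h a0 c dt w f gp gm w' : (1 <= K)%nat -> 0 < h ->
  GridPP m K h a0 w -> PiecewisePoly f -> (forall x, f (x + INR K * h) = f x) ->
  HermiteInterp m K h a0 (Splus c dt f) gp -> HermiteInterp m K h a0 (Sminus c dt f) gm ->
  (forall x, w' x = w x + gp x - gm x) ->
  seminorm_sq m (INR K * h) (fun x => w' x - Splus c dt f x)
  + seminorm_sq m (INR K * h) (fun x => w' x + Sminus c dt f x)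
  = seminorm_sq m (INR K * h) (fun x => f x - Splus c dt w x)
  + seminorm_sq m (INR K * h) (fun x => f x + Sminus c dt w x).
Proof.
  intros HK Hh Hw Hf Pf Hgp Hgm Hw'.
  assert (HL : 0 < INR K * h) by (assert (1 <= INR K) by (apply (le_INR 1); auto); nra).
  set (a := Splus c dt f). set (b := Sminus c dt f).
  set (X := fun x => w x - b x). set (Y := fun x => w x + a x).
  set (E := fun x => (gp x - a x) + -1 * (gm x - b x)).
  assert (PWw : PiecewisePoly w) by (apply (GridPP_PiecewisePoly m K h a0); auto).
  assert (PWg : forall g f, HermiteInterp m K h a0 f g -> PiecewisePoly g)
    by (intros g f' Hg; apply (GridPP_PiecewisePoly m K h a0);
        auto; eapply HermiteInterp_GridPP; eauto).
  assert (PWa : PiecewisePoly a) by (apply PiecewisePoly_Splus; auto).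
  assert (PWb : PiecewisePoly b) by (apply PiecewisePoly_Sminus; auto).
  assert (PWX : PiecewisePoly X) by (apply PiecewisePoly_minus; auto).
  assert (PWY : PiecewisePoly Y) by (apply PiecewisePoly_plus; auto).
  assert (PWE : PiecewisePoly E)
    by (apply PiecewisePoly_plus; [|apply PiecewisePoly_scal]; apply PiecewisePoly_minus; eauto).
  assert (Ortho : sip m 0 (INR K * h) (fun x => X x + Y x + E x) E = 0).
  { set (u := fun x => 2 * w x + (gp x + -1 * gm x)).
    assert (Hu : GridPP m K h a0 u)
      by (apply GridPP_plus; [apply GridPP_scal|apply GridPP_plus; [|apply GridPP_scal]];
          eauto using HermiteInterp_GridPP).
    rewrite (sip_ext m 0 _ _ u E E) by (intro; unfold X, Y, E, u; ring).
    apply (sip_interpolation_errors K h a0); auto.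
    - apply Splus_periodic, Pf.
    - apply Sminus_periodic, Pf. }
  assert (PW1 : PiecewisePoly (fun x => w' x - a x)).
  { apply (PiecewisePoly_ext (fun x => X x + E x)); [intro; unfold X, E; rewrite Hw'; ring|].
    apply PiecewisePoly_plus; auto. }
  assert (PW2 : PiecewisePoly (fun x => w' x + b x)).
  { apply (PiecewisePoly_ext (fun x => Y x + E x)); [intro; unfold Y, E; rewrite Hw'; ring|].
    apply PiecewisePoly_plus; auto. }
  rewrite !(seminorm_sq_sip m (INR K * h))
    by auto using PiecewisePoly_minus, PiecewisePoly_plus, PiecewisePoly_Splus,
                  PiecewisePoly_Sminus.
  rewrite (sip_ext m 0 _ (fun x => w' x - a x) (fun x => X x + E x)
                         (fun x => w' x - a x) (fun x => X x + E x))
    by (intro; unfold X, E; rewrite Hw'; ring).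
  rewrite (sip_ext m 0 _ (fun x => w' x + b x) (fun x => Y x + E x)
                         (fun x => w' x + b x) (fun x => Y x + E x))
    by (intro; unfold Y, E; rewrite Hw'; ring).
  rewrite sip_energy_split, Ortho by auto.
  rewrite <- sip_shifted_characteristics by (auto; apply Hw). unfold X, Y, a, b. ring.
Qed.

End Energy.

Theorem mainTheorem1
  (m K : nat) (h c dt : R) (p v : nat -> R -> R) :
  (1 <= K)%nat -> 0 < h -> 0 < c -> 0 < dt ->
  (forall n, InRange m K h 0 (p n)) ->
  (forall n, InRange m K h (h / 2) (v n)) ->
  (forall n, exists gp gm,
      HermiteInterp m K h (h / 2) (Splus c dt (p n)) gp /\
      HermiteInterp m K h (h / 2) (Sminus c dt (p n)) gm /\
      forall x, v (S n) x = v n x + gp x - gm x) ->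
  (forall n, exists gp gm,
      HermiteInterp m K h 0 (Splus c dt (v (S n))) gp /\
      HermiteInterp m K h 0 (Sminus c dt (v (S n))) gm /\
      forall x, p (S n) x = p n x + gp x - gm x) ->
  let L := INR K * h in
  let Q := fun n =>
    seminorm_sq m L (fun x => p n x - Splus c dt (v n) x)
    + seminorm_sq m L (fun x => p n x + Sminus c dt (v n) x) in
  let Rh := fun n =>
    seminorm_sq m L (fun x => v (S n) x - Splus c dt (p n) x)
    + seminorm_sq m L (fun x => v (S n) x + Sminus c dt (p n) x) in
  forall n : nat, Q (S n) = Rh n /\ Rh n = Q n /\ Q n = Q 0%nat /\ Rh n = Q 0%nat.
Proof.
  intros HK Hh _ _ Hp Hv Hvupd Hpupd L Q Rh.
  assert (v_half_step : forall n, Rh n = Q n).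
  { intro n. destruct (Hvupd n) as [gp [gm [Hgp [Hgm Hupd]]]].
    apply (half_step_energy m K h (h / 2) c dt (v n) (p n) gp gm); auto.
    - apply (InRange_GridPP m K h (h / 2)), Hv.
    - apply (GridPP_PiecewisePoly m K h 0); auto. apply (InRange_GridPP m), Hp.
    - apply (InRange_GridPP m K h 0), Hp. }
  assert (p_half_step : forall n, Q (S n) = Rh n).
  { intro n. destruct (Hpupd n) as [gp [gm [Hgp [Hgm Hupd]]]].
    apply (half_step_energy m K h 0 c dt (p n) (v (S n)) gp gm); auto.
    - apply (InRange_GridPP m K h 0), Hp.
    - apply (GridPP_PiecewisePoly m K h (h / 2)); auto. apply (InRange_GridPP m), Hv.
    - apply (InRange_GridPP m K h (h / 2)), Hv. }
  assert (Hconst : forall n, Q n = Q 0%nat).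
  { induction n as [|n IH]; auto. rewrite p_half_step, v_half_step. exact IH. }
  intro n. rewrite p_half_step, !v_half_step. auto.
Qed.
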